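(* Let $t\in T_2$, write $xy$ for $t(x,y)$, let $\mathcal{T}_t$ be the variety defined by $t(x,y)=x$, and let $A=X\mathcal{T}_t^{\,p}$ be the free $\mathcal{T}_t^{\,p}$-algebra over a set $X$, written as the semilattice sum $A=\bigsqcup_{s\in S}A_s$ of its semilattice replica classes $A_s$ (each in $\mathcal{T}_t$) over $S=A/\varrho\cong X\mathcal{S}$. Let $\theta$ be a congruence of $A$, and suppose $(a'_r,b'_s)\in\theta$ for some $r,s\in S$, $a'_r\in A_r$, $b'_s\in A_s$. Then for every $a_r\in A_r$ and every $b_s\in A_s$, $(b_s,\,b_sa_r)\in\theta$.
   Context: $\Omega$-algebras are of a plural similarity type (no nullary operation symbols, at least one operation symbol of arity $\ge2$). $T_n$ is the set of $\Omega$-terms in $x_1,\dots,x_n$ in which all $n$ variables occur. An identity is regular if the same variables occur on both sides. $\mathcal{S}$ is the variety of $\Omega$-algebras satisfying all regular identities; the semilattice replica congruence $\varrho$ of $A$ is the smallest congruence with $A/\varrho\in\mathcal{S}$. Prolongation: for an identity $\sigma$ of the form $u(y_1,\dots,y_n)=v(y_1,\dots,y_n)$ and $m\ge1$, $\sigma^p_m$ is the set of identities $u(r_1,\dots,r_n)=v(r_1,\dots,r_n)$ obtained by substituting $r_i(x_1,\dots,x_m)$ for $y_i$, with $r_i$ ranging over $T_m$; $\sigma^p=\bigcup_m\sigma^p_m$; $\Sigma^p=\bigcup_{\sigma\in\Sigma}\sigma^p$. $\mathcal{V}^p$ is the variety defined by $\mathrm{Id}(\mathcal{V})^p$, where $\mathrm{Id}(\mathcal{V})$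 is the set of all identities of $\mathcal{V}$. (It is known that the $\varrho$-classes of $X\mathcal{T}_t^{\,p}$ lie in $\mathcal{T}_t$ and $A/\varrho$ is the free semilattice on $X$.) *)

From mathcomp Require Import all_boot.
Set Implicit Arguments.
Unset Strict Implicit.
Unset Printing Implicit Defensive.

Record signature := Signature { op : Type; arity : op -> nat }.

Definition plural (S : signature) : Prop :=
  (forall o : op S, 0 < arity o) /\ exists o : op S, 1 < arity o.

Inductive term (S : signature) (V : Type) : Type :=
| Var : V -> term S V
| App : forall o : op S, ('I_(arity o) -> term S V) -> term S V.
Arguments Var {S V}.
Arguments App {S V}.

Fixpoint occurs (S : signature) (V : Type) (x : V) (u : term S V) : Prop :=
  match u with
  | Var y => x = y
  | App o f => exists i, occurs x (f i)
  end.

(** T_n : terms in x_1..x_n (here indexed by 'I_n) in which all variables occur. *)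
Definition in_T (S : signature) (n : nat) (u : term S 'I_n) : Prop :=
  forall i : 'I_n, occurs i u.

Fixpoint subst (S : signature) (V W : Type) (g : V -> term S W) (u : term S V)
  : term S W :=
  match u with
  | Var x => g x
  | App o f => App o (fun i => subst g (f i))
  end.

Record algebra (S : signature) := Algebra {
  carrier :> Type;
  ops : forall o : op S, ('I_(arity o) -> carrier) -> carrier }.

Fixpoint eval (S : signature) (A : algebra S) (V : Type) (g : V -> A)
  (u : term S V) : A :=
  match u with
  | Var x => g x
  | App o f => @ops S A o (fun i => eval g (f i))
  end.

Definition identity (S : signature) := (term S nat * term S nat)%type.

Definition satisfies (S : signature) (A : algebra S) (e : identity S) : Prop :=
  forall g : nat -> A, eval g e.1 = eval g e.2.

Definition models (S : signature) (Sigma : identity S -> Prop) (A : algebra S)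
  : Prop := forall e, Sigma e -> satisfies A e.

Definition emb (S : signature) (m : nat) (u : term S 'I_m) : term S nat :=
  subst (fun i : 'I_m => Var (nat_of_ord i)) u.

(** The identity t(x,y) = x, with x = variable 0, y = variable 1. *)
Definition tid (S : signature) (t : term S 'I_2) : identity S :=
  (emb t, Var 0).

Definition Id_T (S : signature) (t : term S 'I_2) (e : identity S) : Prop :=
  forall B : algebra S, satisfies B (tid t) -> satisfies B e.

Definition prolong (S : signature) (Sigma : identity S -> Prop)
  (e : identity S) : Prop :=
  exists sigma, Sigma sigma /\
  exists m : nat, 0 < m /\
  exists r : nat -> term S 'I_m, (forall i, in_T (r i)) /\
    e = (emb (subst r sigma.1), emb (subst r sigma.2)).

Definition in_Tp (S : signature) (t : term S 'I_2) (B : algebra S) : Prop :=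
  models (prolong (Id_T t)) B.

(** The free T_t^p-algebra X T_t^p is the term algebra over X modulo
    [free_eq t]; we work with it as a setoid on [term S X]. *)
Definition free_eq (S : signature) (t : term S 'I_2) (X : Type)
  (u v : term S X) : Prop :=
  forall B : algebra S, in_Tp t B -> forall g : X -> B, eval g u = eval g v.

(** Congruences of A = X T_t^p, as relations on representing terms. *)
Definition is_cong (S : signature) (t : term S 'I_2) (X : Type)
  (th : term S X -> term S X -> Prop) : Prop :=
  [/\ (forall u, th u u),
      (forall u v, th u v -> th v u),
      (forall u v w, th u v -> th v w -> th u w),
      (forall u v, free_eq t u v -> th u v)
    & (forall o (f g : 'I_(arity o) -> term S X),
         (forall i, th (f i) (g i)) -> th (App o f) (App o g))].

Definition regular (S : signature) (e : identity S) : Prop :=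
  forall x : nat, occurs x e.1 <-> occurs x e.2.

Definition quot_in_S (S : signature) (X : Type)
  (th : term S X -> term S X -> Prop) : Prop :=
  forall e : identity S, regular e ->
    forall g : nat -> term S X, th (subst g e.1) (subst g e.2).

Definition rho (S : signature) (t : term S 'I_2) (X : Type) (u v : term S X)
  : Prop :=
  forall th, is_cong t th -> quot_in_S th -> th u v.

Definition tapp (S : signature) (t : term S 'I_2) (X : Type) (x y : term S X)
  : term S X :=
  subst (fun i : 'I_2 => if nat_of_ord i == 0 then x else y) t.

From mathcomp Require Import all_boot boolp.
Set Implicit Arguments.
Unset Strict Implicit.
Unset Printing Implicit Defensive.

(* The variable content of a term is a congruence whose quotient is a
   semilattice, so rho-related terms have the same variables.  For terms u, v
   with the same variables, renaming those variables to x_1, ..., x_m turns u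
   and v into members of T_m, and then u v = u is an instance of the
   prolongation of t(x, y) = x.  Hence
     b  theta  b b'  theta  b a'   and   a  theta  a a'  theta  a b',
   so  b a  theta  (b a')(a b') = b a'  theta  b,  the middle equation holding
   in A because b a' and a b' have the same variables. *)

Section Terms.

Variable S : signature.

Lemma eval_subst (A : algebra S) (V W : Type) (g : W -> A)
    (s : V -> term S W) (u : term S V) :
  eval g (subst s u) = eval (fun x => eval g (s x)) u.
Proof. by elim: u => [x|o f IH] //=; congr (ops _); apply: funext. Qed.

Lemma eq_eval (A : algebra S) (V : Type) (g1 g2 : V -> A) (u : term S V) :
  (forall x, occurs x u -> g1 x = g2 x) -> eval g1 u = eval g2 u.
Proof.
elim: u => [x|o f IH] /= eq_g; first exact: eq_g.
congr (ops _); apply: funext => i; apply: IH => x x_fi.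
by apply: eq_g; exists i.
Qed.

Lemma occurs_subst (V W : Type) (s : V -> term S W) (u : term S V) (x : W) :
  occurs x (subst s u) <-> exists2 y, occurs y u & occurs x (s y).
Proof.
elim: u => [z|o f IH] /=; first by split => [|[y -> //]]; exists z.
split => [[i /IH [y y_fi x_sy]]|[y [i y_fi] x_sy]]; last first.
  by exists i; apply/IH; exists y.
by exists y => //; exists i.
Qed.

Lemma exists_occurs (HS : plural S) (V : Type) (u : term S V) :
  exists x, occurs x u.
Proof.
have [arity_gt0 _] := HS.
elim: u => [x|o f IH]; first by exists x.
have [x x_f0] := IH (Ordinal (arity_gt0 o)).
by exists x, (Ordinal (arity_gt0 o)).
Qed.

End Terms.

Section Renaming.

Variables (S : signature) (X : Type).

Fixpoint vars (u : term S X) : seq {classic X} :=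
  match u with
  | Var x => [:: x]
  | App o f => flatten [seq vars (f i) | i <- enum 'I_(arity o)]
  end.

Lemma mem_vars (u : term S X) (x : X) : (x : {classic X}) \in vars u <-> occurs x u.
Proof.
elim: u => [y|o f IH] /=; first by rewrite mem_seq1; split => [/eqP|->].
split => [/flatten_mapP [i _ /IH]|[i /IH x_fi]]; first by exists i.
by apply/flatten_mapP; exists i; rewrite ?mem_enum.
Qed.

Lemma vars_ord_bij (u : term S X) (x0 : X) : occurs x0 u ->
  exists n (idx : X -> 'I_n.+1) (var : 'I_n.+1 -> X),
  [/\ forall i, occurs (var i) u, forall i, idx (var i) = i
    & forall x, occurs x u -> var (idx x) = x].
Proof.
move=> x0_u; set L := undup (vars u).
have mem_L x : (x : {classic X}) \in L <-> occurs x u by rewrite mem_undup mem_vars.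
have [n size_L] : exists n, size L = n.+1.
  case E: L => [|y L']; last by exists (size L').
  by have := (mem_L x0).2 x0_u; rewrite E.
exists n, (fun x => inord (index (x : {classic X}) L)), (fun i => nth x0 L i).
split=> [i|i|x /mem_L x_L].
- by apply/mem_L; rewrite mem_nth // size_L.
- by rewrite index_uniq ?inord_val ?undup_uniq ?size_L.
- by rewrite inordK; [exact: (nth_index (T := {classic X})) | rewrite -size_L index_mem].
Qed.

End Renaming.

Section TApp.

Variables (S : signature) (t : term S 'I_2).

Definition same_vars (V : Type) (u v : term S V) := forall x, occurs x u <-> occurs x v.

Lemma eval_tapp (A : algebra S) (V : Type) (g : V -> A) (u v : term S V) :
  eval g (tapp t u v) =
  eval (fun i : 'I_2 => if nat_of_ord i == 0 then eval g u else eval g v) t.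
Proof. by rewrite eval_subst; apply: eq_eval => i _; case: ifP. Qed.

Lemma occurs_tapp (Ht : in_T t) (V : Type) (u v : term S V) (x : V) :
  occurs x (tapp t u v) <-> occurs x u \/ occurs x v.
Proof.
rewrite occurs_subst; split=> [[i _]|[x_u|x_v]]; first by case: ifP; tauto.
- by exists ord0.
- by exists (@Ordinal 2 1 isT).
Qed.

Lemma in_T_rename (V : Type) (n : nat) (idx : V -> 'I_n.+1) (var : 'I_n.+1 -> V)
    (w : term S V) :
  (forall i, occurs (var i) w) -> (forall i, idx (var i) = i) ->
  in_T (subst (fun x => Var (idx x)) w).
Proof. by move=> var_w idxK i; apply/occurs_subst; exists (var i); rewrite ?idxK. Qed.

(* The prolongation of t(x, y) = x by the substitution x := r1, y := r2. *)
Lemma in_Tp_tapp (B : algebra S) (HB : in_Tp t B) (n : nat)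
    (r1 r2 : term S 'I_n.+1) (h : 'I_n.+1 -> B) :
  in_T r1 -> in_T r2 -> eval h (tapp t r1 r2) = eval h r1.
Proof.
move=> r1_T r2_T; pose r k := if k == 1 then r2 else r1.
have eval_emb (w : term S 'I_n.+1) : eval (fun k => h (inord k)) (emb w) = eval h w.
  by rewrite eval_subst; apply: eq_eval => i _ /=; rewrite inord_val.
have := HB (emb (subst r (emb t)), emb (subst r (Var 0))) _ (fun k => h (inord k)).
rewrite /= !eval_emb /emb !eval_subst => <-; first by apply: eq_eval => -[[|[|k]] lt_k2].
exists (tid t); split=> [//|]; exists n.+1; split=> //.
by exists r; split=> // k; rewrite /r; case: ifP.
Qed.

Lemma free_eq_tapp (HS : plural S) (X : Type) (u v : term S X) :
  same_vars u v -> free_eq t (tapp t u v) u.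
Proof.
move=> uv B HB g; have [x0 x0_u] := exists_occurs HS u.
have [n [idx [var [var_u idxK varK]]]] := vars_ord_bij x0_u.
pose rename (w : term S X) := subst (fun x => Var (idx x)) w.
have eval_rename w : same_vars u w -> eval (fun i => g (var i)) (rename w) = eval g w.
  by move=> uw; rewrite eval_subst; apply: eq_eval => x /uw /varK /= ->.
have var_v i : occurs (var i) v by apply/uv.
rewrite -[RHS](eval_rename u) //.
rewrite -(in_Tp_tapp HB _ (in_T_rename var_u idxK) (in_T_rename var_v idxK)).
by rewrite !eval_tapp !eval_rename.
Qed.

End TApp.

Section VariableContent.

Variables (S : signature) (HS : plural S) (t : term S 'I_2).

(* The two-element semilattice, every basic operation being the join. *)
Definition join_algebra : algebra S :=
  @Algebra S Prop (fun o f => exists i, f i).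

Lemma eval_join (V : Type) (g : V -> Prop) (u : term S V) :
  (eval (A := join_algebra) g u : Prop) <-> exists2 x, occurs x u & g x.
Proof.
elim: u => [x|o f IH] /=; first by split => [|[y -> //]]; exists x.
split => [[i /IH [y y_fi gy]]|[y [i y_fi] gy]]; last by exists i; apply/IH; exists y.
by exists y => //; exists i.
Qed.

(* A term in T_m takes the value "some x_i holds" in [join_algebra]. *)
Lemma join_algebra_in_Tp : in_Tp t join_algebra.
Proof.
move=> e [sigma [_ [m [_ [r [r_T ->]]]]]] g /=.
have eval_r (w : term S nat) :
    (eval (A := join_algebra) g (emb (subst r w)) : Prop) <-> exists i : 'I_m, g i.
  rewrite eval_join; split=> [[x /occurs_subst [i _ /= ->]]|[i gi]]; first by exists i.
  exists (nat_of_ord i) => //; apply/occurs_subst; exists i => //.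
  apply/occurs_subst; have [y y_w] := exists_occurs HS w.
  by exists y => //; apply: r_T.
by apply: propext; rewrite eval_r eval_r.
Qed.

Lemma free_eq_same_vars (X : Type) (u v : term S X) :
  free_eq t u v -> same_vars u v.
Proof.
move=> uv x; have := uv _ join_algebra_in_Tp (fun y => y = x).
have eval_eqx w : (eval (A := join_algebra) (fun y => y = x) w : Prop) <-> occurs x w.
  by rewrite eval_join; split=> [[y y_w <-] | x_w] //; exists x.
by move=> /= eq_uv; rewrite -eval_eqx eq_uv eval_eqx.
Qed.

Lemma is_cong_same_vars (X : Type) : is_cong t (@same_vars S X).
Proof.
split=> [u x|u v uv x|u v w uv vw x|u v /free_eq_same_vars //|o f g fg x] //=.
- by rewrite uv.
- by rewrite uv vw.
- by split=> -[i /fg x_i]; exists i.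
Qed.

Lemma quot_in_S_same_vars (X : Type) : quot_in_S (@same_vars S X).
Proof.
move=> e e_reg g x; rewrite !occurs_subst.
by split=> -[y /e_reg y_e x_gy]; exists y.
Qed.

Lemma rho_same_vars (X : Type) (u v : term S X) : rho t u v -> same_vars u v.
Proof. by apply; [apply: is_cong_same_vars | apply: quot_in_S_same_vars]. Qed.

End VariableContent.

Section Congruence.

Variables (S : signature) (HS : plural S) (t : term S 'I_2) (X : Type).
Variables (theta : term S X -> term S X -> Prop) (Htheta : is_cong t theta).

Lemma cong_subst (V : Type) (s1 s2 : V -> term S X) (w : term S V) :
  (forall x, theta (s1 x) (s2 x)) -> theta (subst s1 w) (subst s2 w).
Proof.
have [_ _ _ _ theta_App] := Htheta.
by elim: w => [x|o f IH] /= s12; [apply: s12 | apply: theta_App => i; apply: IH].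
Qed.

Lemma cong_tapp (u1 u2 v1 v2 : term S X) :
  theta u1 u2 -> theta v1 v2 -> theta (tapp t u1 v1) (tapp t u2 v2).
Proof. by move=> u12 v12; apply: cong_subst => i; case: ifP. Qed.

Lemma cong_tapp_same_vars (u v : term S X) :
  same_vars u v -> theta u (tapp t u v).
Proof.
have [_ theta_sym _ theta_free _] := Htheta.
by move=> uv; apply/theta_sym/theta_free/free_eq_tapp.
Qed.

Lemma cong_tapp_absorb (u u' w : term S X) :
  same_vars u u' -> theta u' w -> theta u (tapp t u w).
Proof.
have [theta_refl _ theta_trans _ _] := Htheta.
move=> uu' u'w; apply: theta_trans (cong_tapp_same_vars uu') _.
exact: cong_tapp (theta_refl u) u'w.
Qed.

End Congruence.

Theorem lemma4p1 (S : signature) (HS : plural S)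
  (t : term S 'I_2) (Ht : in_T t) (X : Type)
  (theta : term S X -> term S X -> Prop) (Htheta : is_cong t theta)
  (a' b' a b : term S X) :
  rho t a a' -> rho t b b' -> theta a' b' -> theta b (tapp t b a).
Proof.
move=> /(rho_same_vars HS) aa' /(rho_same_vars HS) bb' a'b'.
have [_ theta_sym theta_trans _ _] := Htheta.
have b_ba' : theta b (tapp t b a') by apply: cong_tapp_absorb bb' (theta_sym _ _ a'b').
have a_ab' : theta a (tapp t a b') by apply: cong_tapp_absorb aa' a'b'.
have same_ba'_ab' : same_vars (tapp t b a') (tapp t a b').
  by move=> x; rewrite !occurs_tapp // -aa' -bb'; tauto.
have ba_ba' : theta (tapp t b a) (tapp t b a').
  apply: theta_trans (cong_tapp Htheta b_ba' a_ab') _.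
  by apply: theta_sym; apply: cong_tapp_same_vars.
exact: theta_trans b_ba' (theta_sym _ _ ba_ba').
Qed.
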